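(* Let $F$ be a forest and let $X$ be a multiset of vertices of $F$. Then there is at most one linear forest that is a subgraph of $F$ with end-multiset equal to $X$.
   Context: A multiset is a set together with a positive integer multiplicity assigned to each member. A linear forest is a forest in which every component is a path. The end-multiset of a linear forest $H$ is the multiset of ends of the components of $H$, where an end of a component $P$ has multiplicity one if $P$ has at least one edge, and multiplicity two if $P$ has no edges. *)

From mathcomp Require Import all_boot.
Set Implicit Arguments. Unset Strict Implicit. Unset Printing Implicit Defensive.

Definition simple_graph (T : finType) (e : rel T) : Prop :=
  symmetric e /\ irreflexive e.

Definition is_forest (T : finType) (e : rel T) : Prop :=
  simple_graph e /\ ~ (exists c : seq T, [/\ uniq c, 3 <= size c & cycle e c]).

Definition is_subgraph (T : finType) (e : rel T) (VH : {set T}) (EH : {set {set T}}) : Prop :=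
  forall E, E \in EH -> exists x y, [/\ E = [set x; y], x != y, e x y, x \in VH & y \in VH].

Definition adjH (T : finType) (EH : {set {set T}}) : rel T :=
  fun x y => (x != y) && ([set x; y] \in EH).

Definition compH (T : finType) (VH : {set T}) (EH : {set {set T}}) (v : T) : {set T} :=
  [set u in VH | connect (fun x y => adjH EH x y && (x \in VH) && (y \in VH)) v u].

Definition comp_is_path (T : finType) (VH : {set T}) (EH : {set {set T}}) (C : {set T}) : Prop :=
  exists p : seq T, [/\ uniq p, [set x in p] = C &
    forall x y, x \in C -> y \in C ->
      adjH EH x y = (x != y) && ((x \in p) && (y \in p) &&
        ((index y p == (index x p).+1) || (index x p == (index y p).+1)))].

Definition linear_forest (T : finType) (VH : {set T}) (EH : {set {set T}}) : Prop :=
  forall v, v \in VH -> comp_is_path VH EH (compH VH EH v).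

Definition degH (T : finType) (EH : {set {set T}}) (v : T) : nat :=
  #|[set u | adjH EH v u]|.

Definition comp_has_edge (T : finType) (EH : {set {set T}}) (C : {set T}) : bool :=
  [exists x in C, exists y in C, adjH EH x y].

(* Multiplicity of v in the end-multiset of H (v lies in exactly one component
   C = compH VH EH v when v \in VH): the ends of the path C are its vertices of
   degree at most one; each end has multiplicity one if C has an edge, and the
   unique vertex of an edgeless component has multiplicity two. *)
Definition end_mult (T : finType) (VH : {set T}) (EH : {set {set T}}) (v : T) : nat :=
  if v \in VH then
    (if comp_has_edge EH (compH VH EH v) then (if degH EH v <= 1 then 1 else 0) else 2)
  else 0.

(* A multiset of vertices is represented by its multiplicity function T -> nat
   (members are the vertices with positive multiplicity). *)

From mathcomp Require Import all_boot zify.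
Set Implicit Arguments. Unset Strict Implicit.

(* In a linear forest every vertex has degree at most 2, and its degree is
   congruent to its end-multiplicity modulo 2 (degrees 0, 1, 2 go with
   multiplicities 2, 1, 0).  Hence two linear forests with the same
   end-multiplicities have edge sets whose symmetric difference has only even
   degrees.  A nonempty graph without vertices of degree one contains a cycle
   (walk without backtracking until a vertex repeats), which a subgraph of a
   forest cannot; so the edge sets agree.  Then so do the vertex sets: a vertex
   of one outside the other has end-multiplicity 0 in both, hence degree 2, but
   its edges lie in both. *)

Section LeafFreeCycle.
Variables (T : finType) (r : rel T).
Hypotheses (r_sym : symmetric r) (r_irr : irreflexive r).

Lemma cycle_of_back_edge x y s w :
  uniq [:: x, y & s] -> path r x (y :: s) -> w \in s -> r x w ->
  exists c : seq T, [/\ uniq c, 3 <= size c & cycle r c].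
Proof.
move=> uniq_xys path_xys ws rxw.
set i := index w s; have lt_i : i < size s by rewrite index_mem.
have take_w : take i.+1 s = rcons (take i s) w by rewrite (take_nth w lt_i) nth_index.
exists (take i.+3 [:: x, y & s]); split.
- exact: take_uniq.
- by rewrite size_takel //= !ltnS ltnW.
- rewrite /= take_w rcons_path last_rcons (r_sym w) rxw andbT -take_w.
  exact: (take_path i.+2 path_xys).
Qed.

Lemma cycle_of_leaf_free : (forall z, #|[set u | r z u]| != 1) ->
  forall a b, r a b -> exists c : seq T, [/\ uniq c, 3 <= size c & cycle r c].
Proof.
move=> no_leaf a b rab.
have other_nbr z y : r z y -> exists2 w, r z w & w != y.
  move=> rzy; have /set0Pn[w] : [set u | r z u] :\ y != set0.
    have := cardsD1 y [set u | r z u]; rewrite inE rzy -cards_eq0.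
    by move: (no_leaf z); lia.
  by rewrite !inE => /andP[wy rzw]; exists w.
(* The simple path is grown at its head [x]; [k] bounds the remaining
   extensions, as a simple path has at most #|T| vertices. *)
suff grow : forall k x y s, #|T| < k + size [:: x, y & s] -> uniq [:: x, y & s] ->
    path r x (y :: s) -> exists c : seq T, [/\ uniq c, 3 <= size c & cycle r c].
  apply: (grow #|T| b a [::]) => /=; [lia | | by rewrite r_sym rab].
  by rewrite inE andbT; apply: contraTneq rab => ->; rewrite r_irr.
elim=> [|k IHk] x y s size_xys uniq_xys path_xys.
  by move: size_xys; rewrite add0n ltnNge -(card_uniqP uniq_xys) max_card.
have [w rxw wy] := other_nbr x y (andP path_xys).1.
have [ws | wNs] := boolP (w \in s).
  exact: (cycle_of_back_edge uniq_xys path_xys ws rxw).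
apply: (IHk w x (y :: s)); first by move: size_xys => /=; lia.
- rewrite /= in uniq_xys *; rewrite uniq_xys !inE (negbTE wy) (negbTE wNs) !orbF andbT.
  by apply: contraTneq rxw => ->; rewrite r_irr.
- by rewrite /= r_sym rxw.
Qed.

End LeafFreeCycle.

Lemma odd_card_symdiff (T : finType) (A B : {set T}) :
  odd #|(A :\: B) :|: (B :\: A)| = odd #|A| (+) odd #|B|.
Proof.
have diffs_disjoint : (A :\: B) :&: (B :\: A) = set0.
  by apply/setP => x; rewrite !inE; case: (x \in A); case: (x \in B).
have := cardsUI (A :\: B) (B :\: A); rewrite diffs_disjoint cards0 addn0 => ->.
rewrite -(cardsID B A) -(cardsID A B) [B :&: A]setIC !oddD.
by rewrite addbACA addbb.
Qed.

Section Subgraphs.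
Variables (T : finType) (e : rel T).
Hypothesis e_sym : symmetric e.

Lemma adjH_sym (E : {set {set T}}) : symmetric (adjH E).
Proof. by move=> x y; rewrite /adjH eq_sym setUC. Qed.

Lemma adjH_irr (E : {set {set T}}) : irreflexive (adjH E).
Proof. by move=> x; rewrite /adjH eqxx. Qed.

Lemma adjH_subgraph V E x y : is_subgraph e V E -> adjH E x y ->
  [/\ x \in V, y \in V & e x y].
Proof.
move=> sub /andP[+ /sub[a [b [Exy _ eab aV bV]]]].
have := set21 x y; have := set22 x y; rewrite Exy.
by move=> /set2P[]-> /set2P[]->; rewrite ?eqxx // e_sym.
Qed.

Lemma is_subgraphU V1 V2 E1 E2 : is_subgraph e V1 E1 -> is_subgraph e V2 E2 ->
  is_subgraph e (V1 :|: V2) (E1 :|: E2).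
Proof.
move=> sub1 sub2 S; rewrite inE => /orP[/sub1|/sub2] [x [y [-> xy exy xV yV]]].
  by exists x, y; rewrite !inE xV yV.
by exists x, y; rewrite !inE xV yV !orbT.
Qed.

Lemma is_subgraphS V (E E' : {set {set T}}) :
  E \subset E' -> is_subgraph e V E' -> is_subgraph e V E.
Proof. by move=> /subsetP sEE' sub S /sEE' /sub. Qed.

Lemma degH_eq0P (E : {set {set T}}) v :
  reflect (forall u, ~~ adjH E v u) (degH E v == 0).
Proof.
rewrite /degH cards_eq0; apply: (iffP eqP) => [N0 u | noadj].
  by apply/negP => vu; have := in_set0 u; rewrite -N0 inE vu.
by apply/setP => u; rewrite !inE (negbTE (noadj u)).
Qed.

Section LinearForest.
Variables (V : {set T}) (E : {set {set T}}).
Hypothesis sub : is_subgraph e V E.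

Lemma degH_notin v : v \notin V -> degH E v = 0.
Proof.
by move=> vNV; apply/eqP/degH_eq0P => u; apply: contra vNV => /(adjH_subgraph sub)[].
Qed.

Lemma mem_compH_self v : v \in V -> v \in compH V E v.
Proof. by move=> vV; rewrite inE vV connect0. Qed.

Lemma mem_compH_adj v u : adjH E v u -> u \in compH V E v.
Proof.
move=> vu; have [vV uV _] := adjH_subgraph sub vu.
by rewrite inE uV connect1 //= vu vV uV.
Qed.

Lemma degH_edgeless v : ~~ comp_has_edge E (compH V E v) -> degH E v = 0.
Proof.
move=> noedge; apply/eqP/degH_eq0P => u; apply: contra noedge => vu.
have [vV _ _] := adjH_subgraph sub vu.
apply/existsP; exists v; rewrite mem_compH_self //=.
by apply/existsP; exists u; rewrite mem_compH_adj.
Qed.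

Lemma degH_gt0 v : comp_has_edge E (compH V E v) -> 0 < degH E v.
Proof.
rewrite lt0n; apply: contraL => /degH_eq0P isolated.
have compH_v u : u \in compH V E v -> u = v.
  rewrite inE => /andP[_ /connectP[[|z q] //= /andP[/andP[/andP[vz _] _] _] _]].
  by have := isolated z; rewrite vz.
apply/existsP => -[x /andP[/compH_v -> /existsP[y /andP[/compH_v ->]]]].
by rewrite adjH_irr.
Qed.

Hypothesis linear : linear_forest V E.

Lemma degH_le2 v : degH E v <= 2.
Proof.
have [vV|vNV] := boolP (v \in V); last by rewrite degH_notin.
have [p [_ _ adjE]] := linear vV; set i := index v p.
have nbrs : [set u | adjH E v u] \subset [set nth v p i.+1; nth v p i.-1].
  apply/subsetP => u; rewrite inE => vu.
  move: (vu); rewrite adjE ?mem_compH_self ?mem_compH_adj //.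
  case/and3P=> _ /andP[_ up] /orP[]/eqP idx; rewrite !inE -?idx ?nth_index ?eqxx //.
  by rewrite /i idx /= nth_index ?eqxx ?orbT.
by rewrite /degH (leq_trans (subset_leq_card nbrs)) // cards2; case: (_ != _).
Qed.

Lemma odd_degH_end_mult v : odd (degH E v) = odd (end_mult V E v).
Proof.
rewrite /end_mult; have [vV|vNV] := boolP (v \in V); last by rewrite degH_notin.
have [edge|noedge] := boolP (comp_has_edge E (compH V E v)); last first.
  by rewrite degH_edgeless.
by move: (degH_gt0 edge) (degH_le2 v); case: (degH E v) => [|[|[|]]].
Qed.

End LinearForest.

Lemma odd_degH_symdiff (E1 E2 : {set {set T}}) v :
  odd (degH ((E1 :\: E2) :|: (E2 :\: E1)) v) = odd (degH E1 v) (+) odd (degH E2 v).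
Proof.
rewrite /degH -odd_card_symdiff; congr odd; apply: eq_card => u.
rewrite !inE /adjH !inE.
by case: (v != u); case: ([set v; u] \in E1); case: ([set v; u] \in E2).
Qed.

Lemma end_mult_subset (V1 V2 : {set T}) (E : {set {set T}}) :
  is_subgraph e V2 E -> (forall v, end_mult V1 E v = end_mult V2 E v) -> V1 \subset V2.
Proof.
move=> sub2 same_mult; apply/subsetP => v vV1; apply/negPn/negP => vNV2.
have := same_mult v; rewrite /end_mult vV1 (negbTE vNV2).
case: comp_has_edge => //; case: leqP => // deg_gt1 _.
by rewrite (degH_notin sub2 vNV2) in deg_gt1.
Qed.

End Subgraphs.

Lemma forest_subgraph_edges_eq (T : finType) (e : rel T) (V1 V2 : {set T})
    (E1 E2 : {set {set T}}) :
  is_forest e -> is_subgraph e V1 E1 -> is_subgraph e V2 E2 ->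
  (forall v, odd (degH E1 v) = odd (degH E2 v)) -> E1 = E2.
Proof.
move=> [[e_sym _] acyclic] sub1 sub2 same_parity.
set D := (E1 :\: E2) :|: (E2 :\: E1).
have [/eqP|[S SD]] := set_0Vmem D.
  by rewrite setU_eq0 !setD_eq0 -eqEsubset => /eqP.
have subD : is_subgraph e (V1 :|: V2) D.
  apply: is_subgraphS (is_subgraphU sub1 sub2).
  by apply/subsetP => F; rewrite !inE => /orP[]/andP[_ ->]; rewrite ?orbT.
have [x [y [Sxy xy _ _ _]]] := subD S SD.
have no_leafD z : #|[set u | adjH D z u]| != 1.
  apply: contraFneq (_ : odd (degH D z) = false) => [deg1|].
    by rewrite /degH deg1.
  by rewrite odd_degH_symdiff same_parity addbb.
have adjD_xy : adjH D x y by rewrite /adjH xy -Sxy.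
have [c [uniq_c size_c cycle_c]] :=
  cycle_of_leaf_free (@adjH_sym _ D) (@adjH_irr _ D) no_leafD adjD_xy.
case: acyclic; exists c; split=> //; apply: sub_cycle cycle_c => u w.
by case/(adjH_subgraph e_sym subD).
Qed.

Theorem mainTheorem17 (T : finType) (e : rel T) (X : T -> nat) :
  is_forest e ->
  forall (V1 V2 : {set T}) (E1 E2 : {set {set T}}),
    is_subgraph e V1 E1 -> linear_forest V1 E1 -> (forall v, end_mult V1 E1 v = X v) ->
    is_subgraph e V2 E2 -> linear_forest V2 E2 -> (forall v, end_mult V2 E2 v = X v) ->
    V1 = V2 /\ E1 = E2.
Proof.
move=> forest_e V1 V2 E1 E2 sub1 linear1 X1 sub2 linear2 X2.
have [[e_sym _] _] := forest_e.
have E12 : E1 = E2.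
  apply: (forest_subgraph_edges_eq forest_e sub1 sub2) => v.
  rewrite (odd_degH_end_mult e_sym sub1 linear1).
  by rewrite (odd_degH_end_mult e_sym sub2 linear2) X1 X2.
subst E2; split=> //; apply/eqP; rewrite eqEsubset.
have same_mult v : end_mult V1 E1 v = end_mult V2 E1 v by rewrite X1 X2.
rewrite (end_mult_subset e_sym sub2 same_mult).
by apply: (end_mult_subset e_sym sub1) => v; rewrite same_mult.
Qed.
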